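(* Consider the following model. States $\omega_t\in\{0,1\}$, $t\in\{1,2\}$, with $\Pr[\omega_1=1]=\mu_0\in(0,1)$ and $\Pr[\omega_2=\omega\mid\omega_1=\omega]=\rho\in(1/2,1)$. In each period an agent A chooses $e_t\in\{0,1\}$; if $e_t=1$ he observes $\omega_t$, if $e_t=0$ he observes $\omega_t$ with probability $\pi\in(0,1)$ and nothing otherwise; he reports $r_t\in\{\varnothing,\omega_t\}$ if he observed $\omega_t$, else $r_t=\varnothing$. A's payoff is $x-c(e_1+e_2)$ with $x=\hat x(r_1,r_2)$, and here the testing cost is $c=0$. A mechanism consists of $\sigma_1\in\{0,1\}$, $\sigma_2:\{\varnothing,0,1\}\to\{0,1\}$, $\hat x:\{\varnothing,0,1\}^2\to\{0,1\}$; A best-responds, following the recommendation and disclosing when indifferent. A mechanism is IC if at every history occurring with positive probability A optimally obeys the testing recommendation and discloses every observed result, and $\hat x(r_1,\varnothing)=0$ whenever $\sigma_2(r_1)=1$. Then in any IC mechanism, if $r_1$ (occurring with positive probability) is such that $\sigma_2(r_1)=0$, we must have $\hat x(r_1,0)=\hat x(r_1,1)=\hat x(r_1,\varnothing)$. *)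

From mathcomp Require Import all_boot all_order all_algebra.
Set Implicit Arguments. Unset Strict Implicit. Unset Printing Implicit Defensive.
Import Order.TTheory GRing.Theory Num.Theory.
Local Open Scope ring_scope.

(* Reports: [None] = the empty report (varnothing), [Some w] = report of state w.
   Binary values {0,1} are encoded as bool (true = 1). *)
Record mech := Mech {
  sig1 : bool;
  sig2 : option bool -> bool;
  xhat : option bool -> option bool -> bool
}.

Section Model.
Variables (R : realFieldType) (mu0 rho pi c : R) (M : mech).

(* probability of observing the state given testing decision e *)
Definition obs (e : bool) : R := if e then 1 else pi.

Definition bR (b : bool) : R := (nat_of_bool b)%:R.

Definition xv (r1 r2 : option bool) : R := bR (xhat M r1 r2).

Definition prior1 (w : bool) : R := if w then mu0 else 1 - mu0.

(* A's belief Pr[omega_2 = 1] at the start of period 2, given what he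
   observed in period 1 (h1 = Some w: saw omega_1 = w; None: saw nothing) *)
Definition belief2 (h1 : option bool) : R :=
  let p1 := match h1 with Some w => (if w then 1 else 0) | None => mu0 end in
  p1 * rho + (1 - p1) * (1 - rho).

Definition prob2 (h1 : option bool) (w2 : bool) : R :=
  if w2 then belief2 h1 else 1 - belief2 h1.

(* Period-2 expected payoff (excluding period-1 cost) after report r1, with
   belief q on omega_2 = 1, testing choice e2, and optimal disclosure. *)
Definition W2 (r1 : option bool) (q : R) (e2 : bool) : R :=
  obs e2 * (q * Num.max (xv r1 (Some true)) (xv r1 None)
            + (1 - q) * Num.max (xv r1 (Some false)) (xv r1 None))
  + (1 - obs e2) * xv r1 None - c * bR e2.

Definition V2 (r1 : option bool) (q : R) : R := Num.max (W2 r1 q false) (W2 r1 q true).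

(* Period-1 expected payoff of testing choice e1, with optimal continuation. *)
Definition V1 (e1 : bool) : R :=
  obs e1 * (mu0 * Num.max (V2 (Some true) (belief2 (Some true)))
                          (V2 None (belief2 (Some true)))
            + (1 - mu0) * Num.max (V2 (Some false) (belief2 (Some false)))
                                  (V2 None (belief2 (Some false))))
  + (1 - obs e1) * V2 None (belief2 None) - c * bR e1.

(* Probability (under obedience and full disclosure) of reaching period 2
   having observed h1 in period 1; on path the report r1 equals h1. *)
Definition reach2 (h1 : option bool) : R :=
  match h1 with
  | Some w => obs (sig1 M) * prior1 w
  | None => 1 - obs (sig1 M)
  end.

Definition IC : Prop :=
  [/\ V1 (~~ sig1 M) <= V1 (sig1 M),
      (forall w : bool, 0 < obs (sig1 M) * prior1 w ->
         V2 None (belief2 (Some w)) <= V2 (Some w) (belief2 (Some w))),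
      (forall h1 : option bool, 0 < reach2 h1 ->
         W2 h1 (belief2 h1) (~~ sig2 M h1) <= W2 h1 (belief2 h1) (sig2 M h1)),
      (forall (h1 : option bool) (w2 : bool),
         0 < reach2 h1 * obs (sig2 M h1) * prob2 h1 w2 ->
         xv h1 None <= xv h1 (Some w2))
    & (forall r1, sig2 M r1 = true -> xhat M r1 None = false)].

End Model.

From mathcomp Require Import all_boot all_order all_algebra.
From mathcomp Require Import ring lra.
Import Order.TTheory GRing.Theory Num.Theory.
Local Open Scope ring_scope.

(* When no test is recommended after r1, the agent still sees omega_2 with
   probability pi, and both states have positive probability, so truthful
   disclosure forces x(r1, varnothing) <= x(r1, w) for both w.  Testing
   instead of not testing then gains (1 - pi) times the excess of the expected
   disclosed reward over x(r1, varnothing), an average with positive weights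
   of two nonnegative numbers.  With c = 0, obedience makes this gain
   nonpositive, so both excesses vanish. *)

Lemma convex_comb_ge_eq (R : realFieldType) (q a b z : R) :
  0 < q < 1 -> z <= a -> z <= b -> q * a + (1 - q) * b <= z -> a = z /\ b = z.
Proof.
move=> /andP[q_gt0 q_lt1] za zb comb_le.
by split; apply/eqP; rewrite eq_le ?za ?zb andbT; nra.
Qed.

Lemma bR_inj (R : realFieldType) : injective (bR R).
Proof. by case=> [] [] // /eqP; rewrite /bR eqr_nat. Qed.

Lemma belief2_in01 {R : realFieldType} {mu0 rho : R} :
  0 <= mu0 <= 1 -> 0 < rho < 1 -> forall h, 0 < belief2 mu0 rho h < 1.
Proof.
move=> /andP[? ?] /andP[? ?].
by case=> [[]|]; apply/andP; rewrite /belief2 /=; split; nra.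
Qed.

Lemma prob2_gt0 {R : realFieldType} {mu0 rho : R} :
  0 <= mu0 <= 1 -> 0 < rho < 1 -> forall h w, 0 < prob2 mu0 rho h w.
Proof.
move=> mu0_01 rho_01 h w.
by have /andP[? ?] := belief2_in01 mu0_01 rho_01 h; case: w => /=; lra.
Qed.

Section SecondPeriod.
Context {R : realFieldType} { pi : R } {M : mech} {r1 : option bool}.

Local Notation x := (xv R M r1).

Lemma W2_testing_gain c q :
  x None <= x (Some true) -> x None <= x (Some false) ->
  W2 pi c M r1 q true - W2 pi c M r1 q false =
  (1 - pi) * (q * x (Some true) + (1 - q) * x (Some false) - x None) - c.
Proof.
move=> disclose1 disclose0.
by rewrite /W2 /obs /bR /= !max_l //; ring.
Qed.

Lemma free_testing_unprofitable_flat {q : R} :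
  0 < q < 1 -> pi < 1 ->
  x None <= x (Some true) -> x None <= x (Some false) ->
  W2 pi 0 M r1 q true <= W2 pi 0 M r1 q false ->
  x (Some true) = x None /\ x (Some false) = x None.
Proof.
move=> q_01 pi_lt1 disclose1 disclose0 no_gain.
have gain := W2_testing_gain 0 q disclose1 disclose0.
apply: convex_comb_ge_eq q_01 disclose1 disclose0 _.
rewrite -subr_le0 -(@pmulr_rle0 _ (1 - pi)) ?subr_gt0 //.
by rewrite -[X in X <= 0]subr0 -gain subr_le0.
Qed.

End SecondPeriod.

Theorem lemma6 (R : realFieldType) (mu0 rho pi : R) (M : mech) :
  0 < mu0 < 1 -> 1 / 2 < rho < 1 -> 0 < pi < 1 ->
  IC mu0 rho pi 0 M ->
  forall r1 : option bool, 0 < reach2 mu0 pi M r1 -> sig2 M r1 = false ->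
  xhat M r1 (Some false) = xhat M r1 (Some true) /\
  xhat M r1 (Some true) = xhat M r1 None.
Proof.
move=> /andP[mu0_gt0 mu0_lt1] /andP[rho_gt_half rho_lt1] /andP[pi_gt0 pi_lt1].
move=> [_ _ IC_test IC_disclose _] r1 reach_r1 no_test.
have mu0_01 : 0 <= mu0 <= 1 by rewrite !ltW.
have rho_01 : 0 < rho < 1 by apply/andP; split; lra.
have disclose w : xv R M r1 None <= xv R M r1 (Some w).
  apply: IC_disclose; rewrite no_test !mulr_gt0 //.
  exact: prob2_gt0.
have skip_test := IC_test r1 reach_r1; rewrite no_test /= in skip_test.
have [x1E x0E] := free_testing_unprofitable_flat (belief2_in01 mu0_01 rho_01 r1)
  pi_lt1 (disclose true) (disclose false) skip_test.
by split; apply: (@bR_inj R); [exact: etrans x0E (esym x1E) | exact: x1E].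
Qed.
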